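(* Let $p\geq 6$ be even, and write the vertices of $C_p\,\square\, C_3$ as $a_i,b_i,c_i$ ($i\in\{1,\dots,p\}$), where for each $i$ the vertices $a_i,b_i,c_i$ form a triangle, and for each of the letters $x\in\{a,b,c\}$ the vertices $x_1,x_2,\dots,x_p$ form a cycle in this cyclic order (indices modulo $p$). Then there exists a perfect matching of $C_p\,\square\, C_3$ containing the nine edges $a_1a_2,\ b_1b_2,\ c_1c_2,\ a_3c_3,\ b_3b_4,\ a_4a_5,\ c_4c_5,\ b_5b_6,\ a_6c_6$, and no perfect matching containing these nine edges can be extended to a Hamiltonian cycle. In particular, $C_p\,\square\, C_3$ does not have the PMH--property.
   Context: $C_n$ denotes the cycle on $n$ vertices. The Cartesian product $G\,\square\, H$ of graphs $G$ and $H$ has vertex set $V(G)\times V(H)$, where $(u,v)$ and $(u',v')$ are adjacent if and only if either $u=u'$ and $vv'\in E(H)$, or $uu'\in E(G)$ and $v=v'$. A perfect matching $M$ of a graph $G$ can be extended to a Hamiltonian cycle if there exists a perfect matching $N$ of $G$ such that $M\cup N$ is (the edge set of) a Hamiltonian cycle of $G$. A graph has the PMH--property if it admits at least one perfect matching and every perfect matching of it can be extended to a Hamiltonian cycle. *)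

From mathcomp Require Import all_boot.
Set Implicit Arguments. Unset Strict Implicit. Unset Printing Implicit Defensive.

(* Simple graphs: a symmetric irreflexive relation [G : rel T] on a finType.
   An edge is represented as a 2-element set [set u; v]. *)
Section Graphs.
Variable T : finType.

Definition is_edge (G : rel T) (e : {set T}) : Prop :=
  exists u v, G u v /\ e = [set u; v].

Definition perfect_matching (G : rel T) (M : {set {set T}}) : Prop :=
  (forall e, e \in M -> is_edge G e) /\
  (forall v : T, #|[set e in M | v \in e]| = 1).

Definition hamiltonian_cycle_edges (G : rel T) (H : {set {set T}}) : Prop :=
  exists s : seq T,
    [/\ uniq s, size s = #|T|, 3 <= size s, cycle G s &
        H = [set [set e.1; e.2] | e in zip s (rot 1 s)]].

Definition extends_to_ham (G : rel T) (M : {set {set T}}) : Prop :=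
  exists N, perfect_matching G N /\ hamiltonian_cycle_edges G (M :|: N).

Definition PMH (G : rel T) : Prop :=
  (exists M, perfect_matching G M) /\
  (forall M, perfect_matching G M -> extends_to_ham G M).
End Graphs.

Definition cycle_adj (n : nat) : rel 'I_n :=
  fun i j => (i != j) && ((j == i.+1 %% n :> nat) || (i == j.+1 %% n :> nat)).

Definition cart_prod (A B : finType) (G : rel A) (H : rel B) : rel (A * B) :=
  fun x y => ((x.1 == y.1) && H x.2 y.2) || (G x.1 y.1 && (x.2 == y.2)).

Definition CpC3 (p : nat) : rel ('I_p * 'I_3) := cart_prod (@cycle_adj p) (@cycle_adj 3).

Definition la : 'I_3 := @Ordinal 3 0 isT.
Definition lb : 'I_3 := @Ordinal 3 1 isT.
Definition lc : 'I_3 := @Ordinal 3 2 isT.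

(* [isv x i v] : v is the vertex x_i (i in 1..p, indices mod p), i.e. the
   vertex (i-1 mod p, x) of C_p [] C_3. *)
Definition isv (p : nat) (x : 'I_3) (i : nat) (v : 'I_p * 'I_3) : bool :=
  (v.2 == x) && (v.1 == (i.-1 %% p) :> nat).

Definition ed (p : nat) (x : 'I_3) (i : nat) (y : 'I_3) (j : nat) : {set 'I_p * 'I_3} :=
  [set v | isv x i v || isv y j v].

Definition nine_edges (p : nat) : {set {set 'I_p * 'I_3}} :=
  [set ed p la 1 la 2; ed p lb 1 lb 2; ed p lc 1 lc 2;
       ed p la 3 lc 3; ed p lb 3 lb 4; ed p la 4 la 5;
       ed p lc 4 lc 5; ed p lb 5 lb 6; ed p la 6 lc 6].

Arguments CpC3 p : clear implicits.
Arguments nine_edges p : clear implicits.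
Arguments ed p x i y j : clear implicits.
Arguments isv p x i v : clear implicits.

(* We write p = q + 6 and use 0-based columns, so x_(i+1) is the vertex
   [V i x].  The proof has two halves.

   Existence: an explicit fixed-point-free involution [mate_v] of the vertex
   set along edges of the graph yields a perfect matching containing the
   nine prescribed edges.

   Non-extendability: suppose a Hamiltonian cycle s contains the nine edges.
   Two general facts about a Hamiltonian cycle drive the argument:
   (1) cut parity: s crosses the boundary of any vertex set an even number
       of times ([cut_parity]);
   (2) no short closed walks: every vertex has exactly two cycle-neighbours,
       so a closed walk of cycle-neighbours through >= 3 distinct vertices
       visits every vertex ([consec_cycle_full]).
   Applying (1) to the blocks of columns 1..k (k = 2, 3, 4) forces the edge
   b_4b_5 and pairs the row edges a_3a_4/c_3c_4 and a_5a_6/c_5c_6; then b_4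
   and b_5 are saturated, the second cycle-neighbours of a_4 and a_5 are
   determined up to two choices each, and in all four cases the a- and c-rows
   close up into a walk missing b_1, contradicting (2). *)

From mathcomp Require Import all_boot zmodp zify.
Set Implicit Arguments. Unset Strict Implicit. Unset Printing Implicit Defensive.

Section CyclicSequences.
Variable T : eqType.

Lemma fpath_closed (f : T -> T) (S : pred T) x l :
  (forall z, S z -> S (f z)) -> S x -> fpath f x l -> all S l.
Proof.
move=> S_f; elim: l x => [|y l IH] x //= Sx /andP[/eqP <- fp].
by rewrite S_f //=; apply: IH fp; exact: S_f.
Qed.

Lemma fpath_switch_parity (f : T -> T) (S : pred T) x l y :
  fpath f x (rcons l y) ->
  odd (count (fun z => S z != S (f z)) (x :: l)) = (S x != S y).
Proof.
elim: l x => [|z l IH] x /=; first by rewrite andbT addn0 oddb => /eqP <-.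
move=> /andP[/eqP <- fp]; rewrite oddD oddb (IH _ fp).
by case: (S x); case: (S (f x)); case: (S y).
Qed.

Lemma fpath_zip (f : T -> T) x l y :
  fpath f x (rcons l y) -> zip (x :: l) (rcons l y) = [seq (z, f z) | z <- x :: l].
Proof.
elim: l x => [|z l IH] x /=; first by rewrite andbT => /eqP ->.
by move=> /andP[/eqP <- fp]; rewrite (IH _ fp).
Qed.

Lemma zip_rot_next (l : seq T) :
  uniq l -> zip l (rot 1 l) = [seq (x, next l x) | x <- l].
Proof. by case: l => [//|x0 l] /cycle_next fp; rewrite rot1_cons (fpath_zip fp). Qed.

Lemma next_closed_sub (l : seq T) (S : pred T) y0 :
  uniq l -> y0 \in l -> S y0 -> (forall z, S z -> S (next l z)) ->
  forall y, y \in l -> S y.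
Proof.
move=> l_uniq /rot_to[i l' def_l] Sy0 S_next y.
have : fcycle (next l) (y0 :: l') by rewrite -def_l rot_cycle; exact: cycle_next.
move=> /(fpath_closed S_next Sy0) /allP l'S.
rewrite -(mem_rot i) def_l inE => /predU1P[-> //|yl'].
by apply: l'S; rewrite mem_rcons inE yl' orbT.
Qed.

Lemma next_next_neq (l : seq T) x :
  uniq l -> 3 <= size l -> x \in l -> next l (next l x) != x.
Proof.
move=> l_uniq l_size xl; apply/eqP => nnx.
have /(uniq_leq_size l_uniq) : {subset l <= [:: x; next l x]}.
  apply: (next_closed_sub l_uniq xl); first by rewrite inE eqxx.
  by move=> z; rewrite !inE => /orP[] /eqP ->; rewrite ?nnx eqxx ?orbT.
by rewrite /=; lia.
Qed.

Lemma even_switches (l : seq T) (S : pred T) :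
  uniq l -> ~~ odd (count (fun x => S x != S (next l x)) l).
Proof.
case: l => [//|x0 l] /cycle_next fp.
by rewrite (fpath_switch_parity S fp) eqxx.
Qed.

End CyclicSequences.

Lemma eq_set2 (T : finType) (a b u v : T) :
  [set a; b] = [set u; v] -> (a = u /\ b = v) \/ (a = v /\ b = u).
Proof.
move=> e.
have : a \in [set u; v] by rewrite -e !inE eqxx.
have : b \in [set u; v] by rewrite -e !inE eqxx orbT.
have : u \in [set a; b] by rewrite e !inE eqxx.
have : v \in [set a; b] by rewrite e !inE eqxx orbT.
rewrite !inE.
by do 4 case/orP=> /eqP ?; subst; auto.
Qed.

Lemma card_count (T : finType) (C : {pred T}) (l : seq T) :
  uniq l -> {subset C <= l} -> #|C| = count (mem C) l.
Proof.
move=> l_uniq sub; rewrite -size_filter -(card_uniqP (filter_uniq _ l_uniq)).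
apply: eq_card => x; rewrite mem_filter.
by apply/idP/andP => [Cx|[]//]; split => //; apply: sub.
Qed.

Lemma involution_perfect_matching (T : finType) (G : rel T) (f : T -> T) :
  involutive f -> (forall v, G v (f v)) ->
  perfect_matching G [set [set v; f v] | v : T].
Proof.
move=> fK Gf; split; first by move=> e /imsetP[v _ ->]; exists v, (f v).
move=> v.
suff -> : [set e in [set [set u; f u] | u : T] | v \in e] = [set [set v; f v]].
  by rewrite cards1.
apply/setP => e.
rewrite !inE; apply/andP/eqP => [[/imsetP[u _ ->]]|->]; last first.
  by split; [apply/imsetP; exists v | rewrite !inE eqxx].
by rewrite !inE => /orP[] /eqP ->; rewrite ?fK // setUC.
Qed.

Section HamiltonianCycle.
Variables (T : finType) (G : rel T).
Hypothesis G_sym : symmetric G.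
Variable s : seq T.
Hypotheses (s_uniq : uniq s) (s_size : size s = #|T|) (s_size3 : 3 <= size s).
Hypothesis s_cycle : cycle G s.

Lemma mem_ham x : x \in s.
Proof.
have /subset_cardP : #|s| = #|T| by rewrite (card_uniqP s_uniq).
by move=> /(_ (subset_predT _)) ->.
Qed.

Definition consec (u v : T) : bool := (next s u == v) || (next s v == u).

Lemma consecC u v : consec u v = consec v u.
Proof. by rewrite /consec orbC. Qed.

Lemma consecE v x : consec v x = (x == next s v) || (x == prev s v).
Proof.
rewrite /consec [next s v == x]eq_sym; congr orb.
by apply/eqP/eqP => [<-|->]; rewrite ?prev_next ?next_prev.
Qed.

Lemma next_neq_prev v : next s v != prev s v.
Proof. by have := next_next_neq s_uniq s_size3 (mem_ham (prev s v)); rewrite next_prev. Qed.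

Lemma consec_adj u v : consec u v -> G u v.
Proof.
by case/orP=> /eqP <-; [|rewrite G_sym]; apply: (next_cycle s_cycle); exact: mem_ham.
Qed.

Lemma consec_other v x : consec v x -> exists2 y, y != x & consec v y.
Proof.
rewrite !consecE => /orP[] /eqP ->; [exists (prev s v) | exists (next s v)].
- by rewrite eq_sym next_neq_prev.
- by rewrite consecE eqxx orbT.
- by rewrite next_neq_prev.
- by rewrite consecE eqxx.
Qed.

Lemma consec_two v x y z :
  consec v x -> consec v y -> x != y -> consec v z -> (z == x) || (z == y).
Proof.
rewrite !consecE => /orP[] /eqP-> /orP[] /eqP->; rewrite ?eqxx // => _;
  by case/orP=> /eqP->; rewrite eqxx ?orbT.
Qed.

Lemma consec_count u v : (next s u == v) + (next s v == u) = consec u v.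
Proof.
rewrite /consec; case: eqP => [nu|]; case: eqP => [nv|] //.
by have := next_next_neq s_uniq s_size3 (mem_ham u); rewrite nu nv eqxx.
Qed.

Lemma ham_edge_consec u v :
  [set u; v] \in [set [set e.1; e.2] | e in zip s (rot 1 s)] -> consec u v.
Proof.
rewrite zip_rot_next // => /imsetP[_ /mapP[z _ ->] /eq_set2] /=.
by case=> -[-> ->]; rewrite /consec eqxx ?orbT.
Qed.

Lemma consec_cycle_full (l : seq T) :
  cycle consec l -> uniq l -> 3 <= size l -> forall z, z \in l.
Proof.
move=> l_cycle l_uniq l_size.
have l_closed x y : x \in l -> consec x y -> y \in l.
  move=> xl.
  have c_next : consec x (next l x) := next_cycle l_cycle xl.
  have c_prev : consec x (prev l x) by rewrite consecC; exact: prev_cycle l_cycle xl.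
  have np : next l x != prev l x.
    by have := next_next_neq l_uniq l_size (etrans (mem_prev l x) xl); rewrite next_prev.
  by move/(consec_two c_next c_prev np)/orP => [] /eqP ->; rewrite ?mem_next ?mem_prev.
case: l l_size {l_cycle l_uniq} l_closed => [//|w l] _ l_closed z.
apply: (next_closed_sub s_uniq (mem_ham w) (S := fun x => x \in w :: l)) (mem_ham z).
  exact: mem_head.
by move=> x xl; apply: l_closed xl _; rewrite /consec eqxx.
Qed.

Lemma cut_parity (S : pred T) (K : seq T) :
  uniq K -> (forall x, S x != S (next s x) -> x \in K) ->
  ~~ odd (count (fun x => S x != S (next s x)) K).
Proof.
move=> K_uniq cross_K; pose C : {pred T} := fun x => S x != S (next s x).
rewrite -[count _ K]/(count (mem C) K) -(card_count K_uniq cross_K).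
by rewrite (card_count s_uniq (fun x _ => mem_ham x)); exact: even_switches.
Qed.

End HamiltonianCycle.

Lemma cycle_adj_cases (m : nat) (i j : 'I_m) : cycle_adj i j ->
  [\/ j = i.+1 :> nat, i = j.+1 :> nat, (i.+1 = m /\ j = 0 :> nat)
    | (j.+1 = m /\ i = 0 :> nat)].
Proof.
rewrite /cycle_adj => /andP[_ /orP[] /eqP e].
  case: (ltnP i.+1 m) => h; first by constructor 1; rewrite e modn_small.
  have im : i.+1 = m by apply/eqP; rewrite eqn_leq h ltn_ord.
  by constructor 3; rewrite e im modnn.
case: (ltnP j.+1 m) => h; first by constructor 2; rewrite e modn_small.
have jm : j.+1 = m by apply/eqP; rewrite eqn_leq h ltn_ord.
by constructor 4; rewrite e jm modnn.
Qed.

Lemma cycle_adjC (m : nat) : symmetric (@cycle_adj m).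
Proof. by move=> i j; rewrite /cycle_adj eq_sym orbC. Qed.

Lemma CpC3_sym (p : nat) : symmetric (CpC3 p).
Proof.
move=> u v; rewrite /CpC3 /cart_prod [cycle_adj u.2 _]cycle_adjC.
by rewrite [cycle_adj u.1 _]cycle_adjC [u.1 == _]eq_sym [u.2 == _]eq_sym.
Qed.

Lemma CpC3_irr (p : nat) (u : 'I_p * 'I_3) : ~~ CpC3 p u u.
Proof. by rewrite /CpC3 /cart_prod /cycle_adj !eqxx. Qed.

Lemma CpC3_cases (p : nat) (u w : 'I_p * 'I_3) : CpC3 p u w ->
  (u.1 = w.1 /\ u.2 != w.2) \/ (cycle_adj u.1 w.1 /\ u.2 = w.2).
Proof.
rewrite /CpC3 /cart_prod => /orP[/andP[/eqP -> /andP[uw _]]|/andP[h /eqP ->]].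
  by left.
by right.
Qed.

Lemma row_cases (t : 'I_3) : t = la \/ t = lb \/ t = lc.
Proof.
by case: t => [[|[|[|t]]] Ht]; [left|right; left|right; right|]; rewrite //; apply: val_inj.
Qed.

(* The perfect matching, on (0-based column, row) pairs: columns are paired
   0-1, 6-7, 8-9, ...; in columns 2..5 row b is paired 2-3, 4-5, while rows a
   and c use the prescribed edges (inside the triangles of columns 2 and 5,
   along the rows between columns 3 and 4). *)
Definition col_mate (i : nat) : nat := if odd i then i.-1 else i.+1.

Definition mate (i : nat) (r : 'I_3) : nat * 'I_3 :=
  if (2 <= i <= 5) && (r != lb) then
    if (i == 2) || (i == 5) then (i, if r == la then lc else la) else (7 - i, r)
  else (col_mate i, r).

Lemma col_mateK : involutive col_mate.
Proof. by case=> [|i] //; rewrite /col_mate /=; case oi: (odd i) => /=; rewrite ?oi ?negbK. Qed.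

Lemma leq_col_mate m i : ~~ odd m -> (m <= col_mate i) = (m <= i).
Proof.
rewrite /col_mate => em; case: ifP => oi.
- have i_pos : 0 < i by case: i oi.
  have : m != i by apply/eqP => mi; move: em; rewrite mi oi.
  lia.
- have : m != i.+1 by apply/eqP => mi; move: em; rewrite mi /= oi.
  lia.
Qed.

Section Prism.
Variable q : nat.
Local Notation n := q.+3.+3.
Local Notation T := ('I_n * 'I_3)%type.
Local Notation G := (CpC3 n).

Definition V (i : nat) (r : 'I_3) : T := (inZp i, r).

Lemma V_eq (c : 'I_n) r i : i < n -> c = i :> nat -> (c, r) = V i r.
Proof. by move=> hi ci; congr pair; apply: val_inj; rewrite /= modn_small. Qed.

Lemma V_of (u : T) : u = V u.1 u.2.
Proof. by case: u => c t; apply: V_eq. Qed.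

Lemma edE x i y j : i < n -> j < n -> ed n x i.+1 y j.+1 = [set V i x; V j y].
Proof.
move=> hi hj; apply/setP => -[c t].
rewrite !inE /isv /= /V !xpair_eqE -!val_eqE /= !modn_small //.
by rewrite [(t == x) && _]andbC [(t == y) && _]andbC.
Qed.

Lemma row_edge (c d : 'I_n) r : d = c.+1 :> nat -> G (c, r) (d, r).
Proof.
move=> dc; rewrite /CpC3 /cart_prod /= eqxx andbT; apply/orP; right.
by rewrite /cycle_adj -val_eqE /= dc neq_ltn ltnSn modn_small ?eqxx // -dc.
Qed.

Lemma prism_nbrs i r w : 1 <= i <= 4 -> G (V i r) w ->
  w = V i.-1 r \/ w = V i.+1 r \/ w = V i la \/ w = V i lb \/ w = V i lc.
Proof.
move=> hi; case: w => c t /CpC3_cases /= [[<- _]|[adj <-]].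
  by case: (row_cases t) => [->|[->|->]]; auto.
move: (cycle_adj_cases adj) (ltn_ord c); rewrite /= modn_small; last by lia.
case=> [ci|ic|[]|[]] cn; try lia.
- by right; left; apply: V_eq; lia.
- by left; apply: V_eq; lia.
Qed.

Section PrismHamiltonian.
Variable s : seq T.
Hypotheses (s_uniq : uniq s) (s_size : size s = #|{: T}|) (s_size3 : 3 <= size s).
Hypothesis s_cycle : cycle G s.
Local Notation consec := (consec s).
Local Notation nxt := (next s).

Lemma next_adj v : G v (nxt v).
Proof. exact: next_cycle s_cycle (mem_ham s_uniq s_size v). Qed.

Section ColumnCut.
Variable k : nat.
Hypothesis k_range : 2 <= k <= 4.

Definition block (v : T) : bool := 1 <= v.1 <= k.

Lemma block_cross u w : block u != block w -> G u w -> u.2 = w.2 /\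
  let i : nat := u.1 in let j : nat := w.1 in
  (i = 0 /\ j = 1) \/ (i = 1 /\ j = 0) \/ (i = k /\ j = k.+1) \/ (i = k.+1 /\ j = k).
Proof.
move=> cross /CpC3_cases [[e _]|[adj ->]]; first by rewrite /block e eqxx in cross.
split => //; move: cross (ltn_ord u.1) (ltn_ord w.1); rewrite /block.
by case: (cycle_adj_cases adj); lia.
Qed.

Lemma block_cross_next i j r :
  (i = 0 /\ j = 1) \/ (i = 1 /\ j = 0) \/ (i = k /\ j = k.+1) \/ (i = k.+1 /\ j = k) ->
  (block (V i r) != block (nxt (V i r))) = (nxt (V i r) == V j r).
Proof.
move=> ij; have [i_lt j_lt] : i < n /\ j < n by lia.
apply/idP/eqP => [cross|->]; last by rewrite /block /= !modn_small //; lia.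
have [e cols] := block_cross cross (next_adj _).
rewrite (surjective_pairing (nxt (V i r))) -e; apply: V_eq => //.
by move: cols; rewrite /= modn_small //; lia.
Qed.

Lemma block_edge_count i j r : (i = 0 /\ j = 1) \/ (i = k /\ j = k.+1) ->
  (block (V i r) != block (nxt (V i r))) + (block (V j r) != block (nxt (V j r)))
  = consec (V i r) (V j r).
Proof.
move=> ij; rewrite (block_cross_next (i := i) (j := j)); last by lia.
by rewrite (block_cross_next (i := j) (j := i)) ?consec_count //; lia.
Qed.

Lemma block_cut_parity :
  ~~ odd (consec (V 0 la) (V 1 la) + consec (V 0 lb) (V 1 lb) + consec (V 0 lc) (V 1 lc)
    + consec (V k la) (V k.+1 la) + consec (V k lb) (V k.+1 lb) + consec (V k lc) (V k.+1 lc)).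
Proof.
pose K := [:: V 0 la; V 1 la; V 0 lb; V 1 lb; V 0 lc; V 1 lc;
              V k la; V k.+1 la; V k lb; V k.+1 lb; V k lc; V k.+1 lc].
have K_uniq : uniq K.
  by rewrite /K; have [->|[->|->]] : k = 2 \/ k = 3 \/ k = 4 by lia.
have cross_K x : block x != block (nxt x) -> x \in K.
  move=> cross; have [_ cols] := block_cross cross (next_adj _).
  have : [|| (x.1 : nat) == 0, (x.1 : nat) == 1, (x.1 : nat) == k | (x.1 : nat) == k.+1].
    by lia.
  move=> /or4P[] /eqP col; rewrite (V_of x) col;
    by case: (row_cases x.2) => [->|[->|->]]; rewrite !inE eqxx ?orbT.
have := cut_parity s_uniq s_size K_uniq cross_K.
rewrite -!block_edge_count; try by [left | right].
by rewrite /= !addnA addn0.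
Qed.
End ColumnCut.

Lemma consec_prism u v : consec u v -> G u v.
Proof. by have := consec_adj (@CpC3_sym n) s_uniq; apply. Qed.

Lemma row_a_exit i j j' :
  1 <= i <= 4 -> (j = i.-1 /\ j' = i.+1) \/ (j = i.+1 /\ j' = i.-1) ->
  consec (V i la) (V j' la) -> ~~ consec (V i la) (V i lb) ->
  consec (V i la) (V j la) || consec (V i la) (V i lc).
Proof.
move=> hi jj' aj' nab; have [y yj' ay] := consec_other s_uniq s_size s_size3 aj'.
case: (prism_nbrs hi (consec_prism ay)) => [|[|[|[|]]]] y_eq; subst y.
- by case: jj' => -[-> ->] in yj' ay *; rewrite ?ay ?eqxx in yj' *.
- by case: jj' => -[-> ->] in yj' ay *; rewrite ?ay ?eqxx in yj' *.
- by have := consec_prism ay; rewrite (negbTE (CpC3_irr _)).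
- by rewrite ay in nab.
- by rewrite ay orbT.
Qed.

Lemma closed_walk_through_b1 (l : seq T) :
  cycle consec l -> V 0 lb \notin l -> uniq l -> 3 <= size l -> False.
Proof.
move=> l_cycle nb0 l_uniq l_size.
by rewrite (consec_cycle_full s_uniq s_size l_cycle l_uniq l_size) in nb0.
Qed.

(* Cut parity and the saturation of b_4 and b_5 leave two possibilities at
   each end of the a- and c-rows in columns 3..6 (1-based). *)
Lemma ac_rows_exits :
  consec (V 0 la) (V 1 la) -> consec (V 0 lb) (V 1 lb) -> consec (V 0 lc) (V 1 lc) ->
  consec (V 2 lb) (V 3 lb) -> consec (V 3 la) (V 4 la) -> consec (V 3 lc) (V 4 lc) ->
  consec (V 4 lb) (V 5 lb) ->
  (consec (V 2 la) (V 3 la) && consec (V 2 lc) (V 3 lc) || consec (V 3 la) (V 3 lc)) &&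
  (consec (V 4 la) (V 5 la) && consec (V 4 lc) (V 5 lc) || consec (V 4 la) (V 4 lc)).
Proof.
move=> a01 b01 c01 b23 a34 c34 b45.
have b34 : consec (V 3 lb) (V 4 lb).
  by have := block_cut_parity (k := 3) isT; rewrite a01 b01 c01 a34 c34; case: consec.
have ac23 : consec (V 2 la) (V 3 la) = consec (V 2 lc) (V 3 lc).
  by have := block_cut_parity (k := 2) isT; rewrite a01 b01 c01 b23; do 2 case: consec.
have ac45 : consec (V 4 la) (V 5 la) = consec (V 4 lc) (V 5 lc).
  by have := block_cut_parity (k := 4) isT; rewrite a01 b01 c01 b45; do 2 case: consec.
have nab3 : ~~ consec (V 3 la) (V 3 lb).
  have b32 : consec (V 3 lb) (V 2 lb) by rewrite consecC.
  by rewrite consecC; apply/negP => /(consec_two s_uniq b32 b34 isT).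
have nab4 : ~~ consec (V 4 la) (V 4 lb).
  have b43 : consec (V 4 lb) (V 3 lb) by rewrite consecC.
  by rewrite consecC; apply/negP => /(consec_two s_uniq b43 b45 isT).
have a43 : consec (V 4 la) (V 3 la) by rewrite consecC.
have := row_a_exit (i := 3) (j := 2) (j' := 4) isT (or_introl (conj erefl erefl)) a34 nab3.
have := row_a_exit (i := 4) (j := 5) (j' := 3) isT (or_intror (conj erefl erefl)) a43 nab4.
by rewrite [consec (V 3 la) _]consecC -ac23 -ac45 !andbb => -> ->.
Qed.

(* In each of the four cases the a- and c-rows close up into a walk of
   cycle-neighbours avoiding b_1. *)
Lemma ac_rows_closed_walk :
  consec (V 2 la) (V 2 lc) -> consec (V 3 la) (V 4 la) -> consec (V 3 lc) (V 4 lc) ->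
  consec (V 5 la) (V 5 lc) ->
  (consec (V 2 la) (V 3 la) && consec (V 2 lc) (V 3 lc) || consec (V 3 la) (V 3 lc)) ->
  (consec (V 4 la) (V 5 la) && consec (V 4 lc) (V 5 lc) || consec (V 4 la) (V 4 lc)) ->
  False.
Proof.
move=> ac2 a34 c34 ac5 /orP[/andP[a23 c23]|ac3] /orP[/andP[a45 c45]|ac4].
- apply: (@closed_walk_through_b1
    [:: V 2 la; V 3 la; V 4 la; V 5 la; V 5 lc; V 4 lc; V 3 lc; V 2 lc]);
    [rewrite /= andbT | by [] | by [] | by []].
  do !(apply/andP; split);
    [exact: a23 | exact: a34 | exact: a45 | exact: ac5 | rewrite consecC; exact: c45
    | rewrite consecC; exact: c34 | rewrite consecC; exact: c23 | rewrite consecC; exact: ac2].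
- apply: (@closed_walk_through_b1 [:: V 2 la; V 3 la; V 4 la; V 4 lc; V 3 lc; V 2 lc]);
    [rewrite /= andbT | by [] | by [] | by []].
  do !(apply/andP; split);
    [exact: a23 | exact: a34 | exact: ac4 | rewrite consecC; exact: c34
    | rewrite consecC; exact: c23 | rewrite consecC; exact: ac2].
- apply: (@closed_walk_through_b1 [:: V 3 la; V 4 la; V 5 la; V 5 lc; V 4 lc; V 3 lc]);
    [rewrite /= andbT | by [] | by [] | by []].
  do !(apply/andP; split);
    [exact: a34 | exact: a45 | exact: ac5 | rewrite consecC; exact: c45
    | rewrite consecC; exact: c34 | rewrite consecC; exact: ac3].
- apply: (@closed_walk_through_b1 [:: V 3 la; V 4 la; V 4 lc; V 3 lc]);
    [rewrite /= andbT | by [] | by [] | by []].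
  do !(apply/andP; split);
    [exact: a34 | exact: ac4 | rewrite consecC; exact: c34 | rewrite consecC; exact: ac3].
Qed.

Lemma nine_edges_not_consec :
  consec (V 0 la) (V 1 la) -> consec (V 0 lb) (V 1 lb) -> consec (V 0 lc) (V 1 lc) ->
  consec (V 2 la) (V 2 lc) -> consec (V 2 lb) (V 3 lb) -> consec (V 3 la) (V 4 la) ->
  consec (V 3 lc) (V 4 lc) -> consec (V 4 lb) (V 5 lb) -> consec (V 5 la) (V 5 lc) ->
  False.
Proof.
move=> a01 b01 c01 ac2 b23 a34 c34 b45 ac5.
by case/andP: (ac_rows_exits a01 b01 c01 b23 a34 c34 b45); exact: ac_rows_closed_walk.
Qed.

End PrismHamiltonian.

Lemma prism_nine_not_extendable M :
  perfect_matching G M -> nine_edges n \subset M -> ~ extends_to_ham G M.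
Proof.
move=> _ sub [N [_ [s [s_uniq s_size s_size3 s_cycle H_eq]]]].
have on_s x i y j : ed n x i.+1 y j.+1 \in nine_edges n -> i < n -> j < n ->
    consec s (V i x) (V j y).
  move=> /(subsetP sub) inM lt_i lt_j; apply: (ham_edge_consec s_uniq).
  by rewrite -H_eq -edE //; apply/setUP; left.
apply: (nine_edges_not_consec s_uniq s_size s_size3 s_cycle);
  by apply: on_s; rewrite // /nine_edges !inE eqxx ?orbT.
Qed.

Hypothesis q_even : ~~ odd q.

(* Since n is even, pairing columns stays within 0..n-1. *)
Lemma col_mate_lt i : i < n -> col_mate i < n.
Proof.
have odd_n : odd n = false by rewrite /= !negbK (negbTE q_even).
rewrite /col_mate; case: ifP => oi lt_i; first lia.
have : i.+1 != n by apply/eqP => e; move: odd_n; rewrite -e /= oi.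
lia.
Qed.

Lemma mate_spec i r : i < n ->
  [/\ (mate i r).1 < n, mate (mate i r).1 (mate i r).2 = (i, r)
    & G (V i r) (V (mate i r).1 (mate i r).2)].
Proof.
move=> lt_i; case: (boolP ((2 <= i <= 5) && (r != lb))) => [/andP[i25 nb]|other].
  have : i = 2 \/ i = 3 \/ i = 4 \/ i = 5 by lia.
  by case=> [->|[->|[->|->]]]; case: (row_cases r) nb => [->|[->|->]].
have -> : mate i r = (col_mate i, r) by rewrite /mate (negbTE other).
split; first exact: col_mate_lt.
  rewrite /mate [col_mate i <= 5]leqNgt (leq_col_mate (m := 6)) // (leq_col_mate (m := 2)) //.
  by rewrite -leqNgt (negbTE other) col_mateK.
have lt_mi := col_mate_lt lt_i.
rewrite /col_mate in lt_mi *; case: ifP => oi in lt_mi *; [rewrite CpC3_sym|];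
  apply: row_edge; rewrite /= !modn_small //; lia.
Qed.

Definition mate_v (v : T) : T := V (mate v.1 v.2).1 (mate v.1 v.2).2.

Lemma mate_vK : involutive mate_v.
Proof.
move=> v; have [lt_m mK _] := mate_spec (i := v.1) v.2 (ltn_ord v.1).
by rewrite {2}(V_of v) /mate_v /= modn_small // mK.
Qed.

Lemma mate_v_adj v : G v (mate_v v).
Proof. by have [_ _] := mate_spec (i := v.1) v.2 (ltn_ord v.1); rewrite -V_of. Qed.

Lemma prism_matching : exists M, perfect_matching G M /\ nine_edges n \subset M.
Proof.
exists [set [set v; mate_v v] | v : T]; split.
  exact: involution_perfect_matching mate_vK mate_v_adj.
rewrite /nine_edges !subUset !sub1set !edE //.
do !(apply/andP; split); apply/imsetP;
  [exists (V 0 la) | exists (V 0 lb) | exists (V 0 lc) | exists (V 2 la) | exists (V 2 lb)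
  | exists (V 3 la) | exists (V 3 lc) | exists (V 4 lb) | exists (V 5 la)]; by [].
Qed.
End Prism.

Theorem mainTheorem3 (p : nat) (hp6 : 6 <= p) (hpe : ~~ odd p) :
  [/\ exists M, perfect_matching (CpC3 p) M /\ nine_edges p \subset M,
      (forall M, perfect_matching (CpC3 p) M -> nine_edges p \subset M ->
         ~ extends_to_ham (CpC3 p) M)
    & ~ PMH (CpC3 p)].
Proof.
have [q def_p] : exists q, p = q.+3.+3 by exists (p - 6); lia.
subst p; have q_even : ~~ odd q by move: hpe; rewrite /= !negbK.
have [M [pmM subM]] := prism_matching q_even.
split; [by exists M | exact: prism_nine_not_extendable |].
by case=> _ all_ext; apply: (prism_nine_not_extendable pmM subM (all_ext M pmM)).
Qed.
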